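(* For every integer $n\ge1$, $$f(n)=\begin{cases}\lfloor n\varphi\rfloor, & \text{if there exists } m\in\mathbb{N} \text{ with } n-1=\lfloor m\varphi\rfloor,\\ \lfloor n/\varphi\rfloor+1, & \text{otherwise,}\end{cases}$$ where $\varphi=(1+\sqrt5)/2$.
   Context: $\mathbb{N}=\{0,1,2,\dots\}$. The sequence $f:\mathbb{N}\to\mathbb{N}$ is defined greedily: $f(0)=0$, and for $n\ge1$, $f(n)$ is the least natural number such that (i) $f(n)\notin\{f(0),f(1),\dots,f(n-1)\}$ and (ii) $\sum_{1\le i\le n} f(i)$ is divisible by $n$. *)

From Stdlib Require Import Reals Lra Lia Arith List.
Open Scope R_scope.

Definition phi : R := (1 + sqrt 5) / 2.

(* floor of a nonnegative real, as a natural number (Int_part x = floor x) *)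
Definition floorN (x : R) : nat := Z.to_nat (Int_part x).

Fixpoint psum (g : nat -> nat) (n : nat) : nat :=
  match n with
  | O => O
  | S k => (psum g k + g (S k))%nat
  end.

Definition admissible (g : nat -> nat) (n k : nat) : Prop :=
  (forall i, (i < n)%nat -> g i <> k) /\
  Nat.divide n (psum g (n - 1) + k)%nat.

Definition greedy (g : nat -> nat) : Prop :=
  g 0%nat = 0%nat /\
  forall n, (1 <= n)%nat ->
    admissible g n (g n) /\ (forall k, admissible g n k -> (g n <= k)%nat).

From Stdlib Require Import Reals Lra Lia Arith List ZArith.
Open Scope R_scope.

(* Write a m = floor (m phi) for the lower Wythoff sequence and
   c k = a k - k + 1 = floor (k / phi) + 1.  The theorem says that f (n+1)
   is a (n+1) when n is a value of a, and c (n+1) otherwise.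

   1. Arithmetic of phi: phi^2 = phi + 1, 3/2 < phi < 2, and m phi is never
      an integer for m > 0 (infinite descent m -> m phi - m).
   2. Beatty-sequence facts: a increases by 1 or 2 at each step, never by 1
      twice in a row; c k is the least index m with k <= a m; and, for
      k >= 1, k is a value of a iff the step a k -> a (k+1) has length 2
      (both conditions say that the fractional part of k phi exceeds 2 - phi).
   3. The candidate F (F 0 = 0, F (m+1) = a (m+1) after a long step, c (m+1)
      after a short one) satisfies psum F n = n * c n.  Hence the residue
      required at step n is c (n-1); when it is still free it is the value
      c n = c (n-1), and when it is already used the next candidate is
      c (n-1) + n = a n.  So F is greedy.
   4. Greedy sequences are unique, so f = F, and the closed form follows. *)

Lemma phi_sq : phi * phi = phi + 1.
Proof. unfold phi. pose proof (sqrt_sqrt 5 ltac:(lra)). nra. Qed.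

Lemma phi_bounds : 3 / 2 < phi < 2.
Proof.
  pose proof (sqrt_sqrt 5 ltac:(lra)). pose proof (sqrt_pos 5).
  unfold phi. split; nra.
Qed.

(* Irrationality of phi: if m phi = z then (z - m) phi = m with 0 < z - m < m,
   which is impossible by strong induction on m. *)
Lemma phi_irrational (m z : nat) : (0 < m)%nat -> INR m * phi <> INR z.
Proof.
  revert z. induction m as [m IH] using lt_wf_ind. intros z Hm E.
  pose proof phi_bounds as Hphi.
  assert (Hm' : 0 < INR m) by (apply lt_0_INR; lia).
  assert (Hz : (m < z < 2 * m)%nat).
  { split; apply INR_lt; rewrite ?mult_INR; simpl; nra. }
  apply (IH (z - m)%nat ltac:(lia) m ltac:(lia)).
  rewrite minus_INR, <- E by lia.
  transitivity (INR m * (phi * phi - phi)); [ring|rewrite phi_sq; ring].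
Qed.

Lemma floorN_spec (x : R) : 0 <= x -> INR (floorN x) <= x < INR (floorN x) + 1.
Proof.
  intros Hx. unfold floorN.
  destruct (base_Int_part x) as [B1 B2].
  assert (Hpos : IZR (-1) < IZR (Int_part x)) by lra. apply lt_IZR in Hpos.
  rewrite INR_IZR_INZ, Z2Nat.id by lia. lra.
Qed.

Lemma floorN_unique (x : R) (k : nat) : INR k <= x < INR k + 1 -> floorN x = k.
Proof.
  intros [H1 H2]. unfold floorN.
  destruct (base_Int_part x) as [B1 B2].
  rewrite INR_IZR_INZ in H1, H2.
  assert (Hup : IZR (Int_part x) < IZR (Z.of_nat k + 1)) by (rewrite plus_IZR; simpl; lra).
  assert (Hlo : IZR (Z.of_nat k) < IZR (Int_part x + 1)) by (rewrite plus_IZR; simpl; lra).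
  apply lt_IZR in Hup. apply lt_IZR in Hlo.
  replace (Int_part x) with (Z.of_nat k) by lia. apply Nat2Z.id.
Qed.

Definition a (m : nat) : nat := floorN (INR m * phi).

Lemma a_spec (m : nat) : INR (a m) <= INR m * phi < INR (a m) + 1.
Proof. apply floorN_spec. pose proof (pos_INR m). pose proof phi_bounds. nra. Qed.

Lemma a_lt_phi (m : nat) : (0 < m)%nat -> INR (a m) < INR m * phi.
Proof.
  intros Hm. destruct (a_spec m) as [[H|H] _]; [exact H|].
  exfalso. exact (phi_irrational m (a m) Hm (eq_sym H)).
Qed.

Lemma a_0 : a 0 = 0%nat.
Proof. apply floorN_unique. simpl. lra. Qed.

Lemma a_1 : a 1 = 1%nat.
Proof. apply floorN_unique. simpl. pose proof phi_bounds. lra. Qed.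

(* Consecutive values differ by 1 or 2 since 1 < phi < 2. *)
Lemma a_step (n : nat) : (a n + 1 <= a (S n) <= a n + 2)%nat.
Proof.
  pose proof (a_spec n). pose proof (a_spec (S n)) as HS. pose proof phi_bounds.
  rewrite S_INR in HS.
  assert (a n < a (S n) < a n + 3)%nat; [|lia].
  split; apply INR_lt; rewrite ?plus_INR; simpl; lra.
Qed.

(* Two consecutive steps have total length at least 3 since 2 phi > 3. *)
Lemma a_step2 (n : nat) : (a n + 3 <= a (S (S n)))%nat.
Proof.
  pose proof (a_spec n). pose proof (a_spec (S (S n))) as HSS. pose proof phi_bounds.
  rewrite !S_INR in HSS.
  assert (a n + 2 < a (S (S n)))%nat; [|lia].
  apply INR_lt. rewrite plus_INR. simpl. lra.
Qed.

Lemma a_lt_iff (i j : nat) : (a i < a j)%nat <-> (i < j)%nat.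
Proof.
  assert (Hinc : forall i j, (i < j)%nat -> (a i < a j)%nat).
  { intros i' j' H. induction H; pose proof (a_step i'); try pose proof (a_step m); lia. }
  split; [|apply Hinc].
  intros H. destruct (Nat.lt_ge_cases i j) as [|Hji]; [assumption|].
  destruct (Nat.eq_dec i j) as [->|Hne]; [lia|].
  pose proof (Hinc j i ltac:(lia)). lia.
Qed.

Lemma a_le_iff (i j : nat) : (a i <= a j)%nat <-> (i <= j)%nat.
Proof. rewrite !Nat.le_ngt, a_lt_iff. reflexivity. Qed.

Lemma a_ge (n : nat) : (n <= a n)%nat.
Proof. induction n; [lia|]. pose proof (a_step n). lia. Qed.

(* c k = floor (k / phi) + 1; it is the least index whose value reaches k. *)
Definition c (k : nat) : nat := (a k - k + 1)%nat.

Definition theta (n : nat) : R := INR n * phi - INR (a n).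

Lemma theta_bounds (n : nat) : 0 <= theta n < 1.
Proof. pose proof (a_spec n). unfold theta. lra. Qed.

(* Key identity, from phi^2 - phi = 1: c n * phi = n + (1 - theta n) phi. *)
Lemma c_phi (n : nat) : INR (c n) * phi = INR n + (1 - theta n) * phi.
Proof.
  unfold c, theta. rewrite plus_INR, minus_INR by apply a_ge. simpl.
  transitivity (INR n * (phi * phi - phi) + (1 - (INR n * phi - INR (a n))) * phi);
    [ring|rewrite phi_sq; ring].
Qed.

Lemma c_least (k : nat) : (1 <= k)%nat -> (a (c k - 1) < k <= a (c k))%nat.
Proof.
  intros Hk. pose proof (c_phi k) as Hc. pose proof (theta_bounds k) as Ht.
  pose proof phi_bounds.
  assert (Hc1 : INR (c k - 1) = INR (c k) - 1) by (rewrite minus_INR; [reflexivity|unfold c; lia]).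
  split.
  - assert (Hle : INR (c k - 1) * phi <= INR k) by nra.
    destruct (Nat.eq_dec (c k - 1) 0) as [->|Hne]; [rewrite a_0; lia|].
    assert (Hlt : INR (c k - 1) * phi < INR k).
    { destruct Hle as [|E]; [assumption|].
      exfalso. exact (phi_irrational (c k - 1) k ltac:(lia) E). }
    pose proof (a_spec (c k - 1)). apply INR_lt. lra.
  - pose proof (a_spec (c k)).
    assert (k < a (c k) + 1)%nat; [|lia].
    apply INR_lt. rewrite plus_INR. simpl. nra.
Qed.

Definition lower (k : nat) : Prop := exists t, k = a t.

Definition wide (m : nat) : Prop := a (S m) = (a m + 2)%nat.

Lemma lower_fixed (k : nat) : (1 <= k)%nat -> lower k -> a (c k) = k.
Proof.
  intros Hk [t ->]. destruct (c_least (a t) Hk) as [H1 H2].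
  rewrite a_lt_iff in H1. assert (Hle : (c (a t) <= t)%nat) by lia.
  rewrite <- a_le_iff in Hle. lia.
Qed.

Lemma wide_iff_theta (m : nat) : wide m <-> 2 - phi < theta m.
Proof.
  unfold wide, theta. pose proof (a_spec (S m)) as [H1 H2]. pose proof (a_step m).
  pose proof (a_lt_phi (S m) ltac:(lia)). pose proof (a_spec m). rewrite S_INR in *.
  split.
  - intros E. rewrite E, plus_INR in *. simpl in *. lra.
  - intros Ht. assert (a m + 1 < a (S m))%nat; [|lia].
    apply INR_lt. rewrite plus_INR. simpl. lra.
Qed.

(* By c_phi, a (c k) = k iff (1 - theta k) phi < 1 = (phi - 1) phi. *)
Lemma lower_iff_theta (k : nat) : (1 <= k)%nat -> lower k <-> 2 - phi < theta k.
Proof.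
  intros Hk. pose proof (c_phi k) as Hc. pose proof (theta_bounds k).
  pose proof phi_bounds. pose proof phi_sq.
  pose proof (a_spec (c k)) as [Ha1 Ha2]. split.
  - intros Hl. rewrite (lower_fixed k Hk Hl) in Ha2. nra.
  - intros Ht. exists (c k). destruct (c_least k Hk) as [_ Hge].
    assert (a (c k) < k + 1)%nat; [|lia].
    apply INR_lt. rewrite plus_INR. simpl. nra.
Qed.

Lemma lower_iff_wide (k : nat) : (1 <= k)%nat -> lower k <-> wide k.
Proof. intros Hk. rewrite lower_iff_theta, wide_iff_theta by exact Hk. reflexivity. Qed.

Lemma not_lower_between (j k : nat) : (a j < k < a (S j))%nat -> ~ lower k.
Proof. intros [H1 H2] [t ->]. rewrite a_lt_iff in H1, H2. lia. Qed.

Lemma gap (k : nat) : (1 <= k)%nat -> ~ lower k ->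
  exists i, c k = S i /\ (a i + 1 = k)%nat /\ a (S i) = (k + 1)%nat.
Proof.
  intros Hk Hnl. destruct (c_least k Hk) as [H1 H2].
  assert (Hne : a (c k) <> k) by (intros E; apply Hnl; exists (c k); auto).
  assert (Hc : c k = S (c k - 1)) by (unfold c; lia).
  exists (c k - 1)%nat. rewrite <- Hc.
  pose proof (a_step (c k - 1)) as Hs. rewrite <- Hc in Hs.
  repeat split; lia.
Qed.

(* floor (n / phi) = a n - n, since 1 / phi = phi - 1. *)
Lemma floor_div (n : nat) : floorN (INR n / phi) = (a n - n)%nat.
Proof.
  apply floorN_unique. pose proof (a_spec n). pose proof phi_bounds.
  rewrite minus_INR by apply a_ge.
  assert (Hinv : / phi = phi - 1).
  { pose proof phi_sq. apply (Rmult_eq_reg_l phi); [rewrite Rinv_r|]; lra. }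
  unfold Rdiv. rewrite Hinv. lra.
Qed.

Section GreedySequence.
Local Open Scope nat_scope.

(* c stays constant across a short step and increases by 1 across a long one. *)
Lemma c_step (m : nat) : c (S m) + a m + 1 = c m + a (S m).
Proof. pose proof (a_ge m). pose proof (a_step m). unfold c. lia. Qed.

Lemma c_le (m : nat) : 1 <= m -> c m <= m.
Proof.
  intros Hm. assert (a m < 2 * m); [|unfold c; lia].
  pose proof (a_lt_phi m Hm). pose proof phi_bounds. apply INR_lt.
  rewrite mult_INR. simpl. pose proof (lt_0_INR m Hm). nra.
Qed.

Lemma c_mono (i j : nat) : i <= j -> c i <= c j.
Proof. induction 1; [lia|]. pose proof (c_step m). pose proof (a_step m). lia. Qed.

Lemma c_step2 (m : nat) : c m < c (S (S m)).
Proof. pose proof (c_step m). pose proof (c_step (S m)). pose proof (a_step2 m). lia. Qed.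

Definition F (n : nat) : nat :=
  match n with
  | O => O
  | S m => if a (S m) =? a m + 2 then a (S m) else c (S m)
  end.

Lemma F_cases (m : nat) :
  (wide m /\ F (S m) = a (S m)) \/ (a (S m) = a m + 1 /\ F (S m) = c (S m)).
Proof.
  unfold wide. simpl F. destruct (Nat.eqb_spec (a (S m)) (a m + 2)); [left|right]; auto.
  pose proof (a_step m). lia.
Qed.

Lemma F_1 : F 1 = 1.
Proof. unfold F, c. rewrite a_1, a_0. reflexivity. Qed.

Lemma F_le_a (i : nat) : F i <= a i.
Proof.
  destruct i as [|m]; [simpl; lia|].
  destruct (F_cases m) as [[_ ->]|[_ ->]]; [lia|pose proof (a_ge (S m)); unfold c; lia].
Qed.

Lemma psum_F (n : nat) : psum F n = n * c n.
Proof.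
  induction n as [|n IH]; [reflexivity|].
  change (psum F (S n)) with (psum F n + F (S n)). rewrite IH.
  pose proof (c_step n). pose proof (a_ge n).
  destruct (F_cases n) as [[Hw ->]|[Hn ->]]; unfold wide, c in *; nia.
Qed.

Lemma F_at_gap (k : nat) : 1 <= k -> ~ lower k -> F (c k) = S k.
Proof.
  intros Hk Hnl. destruct (gap k Hk Hnl) as [i [-> [H1 H2]]].
  destruct (F_cases i) as [[_ ->]|[Hn _]]; lia.
Qed.

Lemma congruent_least (m r k : nat) :
  r <= m -> Nat.divide (S m) (m * r + k) -> k = r \/ r + S m <= k.
Proof.
  intros Hr [q Hq].
  destruct (lt_eq_lt_dec q r) as [[Hlt| ->]|Hgt]; nia.
Qed.

Lemma used_value (m : nat) : 1 <= m -> wide m -> exists i, i <= m /\ F i = c m.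
Proof.
  intros Hm Hw. destruct m as [|p]; [lia|].
  destruct (F_cases p) as [[Hwp _]|[_ HF]]; [|exists (S p); auto].
  assert (Hp : 1 <= p).
  { destruct p; [|lia]. unfold wide in Hwp. rewrite a_1, a_0 in Hwp. discriminate. }
  set (k := c p).
  assert (Hk1 : 1 <= k) by (unfold k, c; lia).
  assert (Hk : a k = p) by (apply lower_fixed, lower_iff_wide; auto).
  assert (HSk : a (c (S p)) = S p) by (apply lower_fixed, lower_iff_wide; auto; lia).
  assert (Hck : c (S p) = S k) by (pose proof (c_step p); unfold wide, k in *; lia).
  assert (Hnl : ~ lower k).
  { rewrite lower_iff_wide by exact Hk1. unfold wide. rewrite <- Hck. lia. }
  exists (c k). split.
  - pose proof (c_le k Hk1). pose proof (c_le p Hp). unfold k in *. lia.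
  - rewrite Hck. exact (F_at_gap k Hk1 Hnl).
Qed.

Lemma narrow_value_pred_lower (m : nat) : 1 <= m -> a (S m) = a m + 1 ->
  exists i, c (S m) = S i /\ lower i.
Proof.
  intros Hm Hn.
  assert (Hnl : ~ lower m) by (rewrite lower_iff_wide by exact Hm; unfold wide; lia).
  destruct (gap m Hm Hnl) as [i [Hci [H1 H2]]].
  assert (Hi : 1 <= i).
  { destruct i; [|lia]. rewrite a_0 in H1. rewrite a_1 in H2. lia. }
  exists i. split.
  - pose proof (c_step m). lia.
  - apply lower_iff_wide; [exact Hi|]. unfold wide. lia.
Qed.

(* After a short step into m+1, c (m+1) is not yet a value of F: values at
   short steps are smaller, and values a (j+1) at long steps have a (j+1) - 1
   outside the range of a. *)
Lemma fresh_value (m : nat) : a (S m) = a m + 1 -> forall i, i <= m -> F i <> c (S m).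
Proof.
  intros Hn i Hi. destruct i as [|j]; [simpl; unfold c; lia|].
  destruct (F_cases j) as [[Hwj ->]|[Hnj ->]].
  - destruct (narrow_value_pred_lower m ltac:(lia) Hn) as [i [-> Hl]].
    intros E. apply (not_lower_between j i); [unfold wide in Hwj; lia | exact Hl].
  - pose proof (c_step j). pose proof (c_step2 j). pose proof (c_mono (S (S j)) (S m)).
    lia.
Qed.

Lemma F_admissible (m : nat) : admissible F (S m) (F (S m)).
Proof.
  unfold admissible. replace (S m - 1) with m by lia. split.
  - destruct (F_cases m) as [[_ HF]|[Hnm HF]]; intros i Hi; rewrite HF.
    + pose proof (F_le_a i). pose proof (proj2 (a_lt_iff i (S m)) Hi). lia.
    + apply fresh_value; [exact Hnm | lia].
  - change (psum F m + F (S m)) with (psum F (S m)). rewrite psum_F.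
    exists (c (S m)). ring.
Qed.

Lemma F_minimal (m k : nat) : admissible F (S m) k -> F (S m) <= k.
Proof.
  unfold admissible. replace (S m - 1) with m by lia. rewrite psum_F.
  intros [Hfresh Hdiv]. destruct m as [|p].
  - pose proof (Hfresh 0 ltac:(lia)). rewrite F_1. simpl in *. lia.
  - pose proof (c_step (S p)). pose proof (a_ge (S p)).
    destruct (congruent_least (S p) (c (S p)) k (c_le (S p) ltac:(lia)) Hdiv) as [->|Hk];
      destruct (F_cases (S p)) as [[Hw ->]|[Hn ->]]; unfold wide, c in *; try lia.
    destruct (used_value (S p) ltac:(lia) Hw) as [i [Hi Hfi]].
    exfalso. apply (Hfresh i ltac:(lia)). exact Hfi.
Qed.

Lemma greedy_F : greedy F.
Proof.
  split; [reflexivity|]. intros n Hn. destruct n as [|m]; [lia|].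
  split; [apply F_admissible | apply F_minimal].
Qed.

Lemma psum_ext (g h : nat -> nat) (N : nat) :
  (forall i, i <= N -> g i = h i) -> psum g N = psum h N.
Proof. induction N; intros H; [reflexivity|]. simpl. rewrite IHN, (H (S N)); auto. Qed.

(* Two greedy sequences agree: by strong induction they see the same
   admissible values at each step and both pick the least one. *)
Lemma greedy_unique (g h : nat -> nat) : greedy g -> greedy h -> forall n, g n = h n.
Proof.
  intros [G0 G] [H0 H] n. induction n as [n IH] using lt_wf_ind.
  destruct n as [|n']; [congruence|].
  assert (Hadm : forall k, admissible g (S n') k <-> admissible h (S n') k).
  { intros k. unfold admissible.
    rewrite (psum_ext g h) by (intros; apply IH; lia).
    split; intros [Hd Hdiv]; split; auto; intros i Hi; [rewrite <- IH|rewrite IH]; auto. }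
  destruct (G (S n') ltac:(lia)) as [Ga Gm]. destruct (H (S n') ltac:(lia)) as [Ha Hm].
  apply Nat.le_antisymm; [apply Gm, Hadm | apply Hm, Hadm]; assumption.
Qed.

Lemma F_closed_form (m : nat) :
  (lower m -> F (S m) = a (S m)) /\ (~ lower m -> F (S m) = c (S m)).
Proof.
  destruct m as [|p].
  - assert (lower 0) by (exists 0; symmetry; exact a_0).
    rewrite F_1, a_1. tauto.
  - rewrite lower_iff_wide by lia.
    destruct (F_cases (S p)) as [[Hw ->]|[Hn ->]]; unfold wide in *; split; intros; lia.
Qed.

End GreedySequence.

Theorem theorem4 :
  (exists g : nat -> nat, greedy g) /\
  (forall g : nat -> nat, greedy g ->
    forall n : nat, (1 <= n)%nat ->
      ((exists m : nat, (n - 1)%nat = floorN (INR m * phi)) ->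
         g n = floorN (INR n * phi)) /\
      (~ (exists m : nat, (n - 1)%nat = floorN (INR m * phi)) ->
         g n = (floorN (INR n / phi) + 1)%nat)).
Proof.
  split; [exists F; exact greedy_F|].
  intros g Hg n Hn. rewrite (greedy_unique g F Hg greedy_F n).
  destruct n as [|m]; [lia|]. replace (S m - 1)%nat with m by lia.
  change (floorN (INR (S m) * phi)) with (a (S m)). rewrite floor_div.
  change (exists t, m = floorN (INR t * phi)) with (lower m).
  exact (F_closed_form m).
Qed.
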